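(* Let $\mathcal{A}$ be a fixed (non-random) countable partition of $\Theta$ into measurable sets, and let $(\theta_1,\mathbf{X}_1),\dots,(\theta_B,\mathbf{X}_B),(\theta,\mathbf{X})$ be i.i.d. pairs with $\theta_b \sim r$ and $\mathbf{X}_b\mid\theta_b$ distributed according to the statistical model at $\theta_b$. For $\theta' \in \Theta$ let $A(\theta')$ be the element of $\mathcal{A}$ containing $\theta'$, $I_{A(\theta')} = \{b : \theta_b \in A(\theta')\}$, $$\widehat H_B(t\mid\theta') = \frac{1}{|I_{A(\theta')}|+1}\Big(\sum_{b\in I_{A(\theta')}} \mathbb{I}\big(\tau(\mathbf{X}_b,\theta_b)\le t\big)+1\Big),$$ $\widehat C_{\theta',B} = \inf\{t : \widehat H_B(t\mid\theta') \ge \alpha\}$, and $\widehat R_B(\mathbf{X}) = \{\theta' \in\Theta : \tau(\mathbf{X},\theta') \ge \widehat C_{\theta',B}\}$. Then $\mathbb{P}(\theta \in \widehat R_B(\mathbf{X})) \ge 1-\alpha$.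
   Context: A statistical model gives, for each parameter $\theta\in\Theta$, a distribution of the data $\mathbf{X}\in\mathcal{X}$; $r$ is a reference probability distribution on $\Theta$; $\alpha\in(0,1)$. A fixed measurable function $\tau:\mathcal{X}\times\Theta\to\mathbb{R}$ (a test statistic) is given, and for every $\theta$ the conditional distribution of $\tau(\mathbf{X},\theta)$ given $\theta$ is continuous (has no atoms). *)

From HB Require Import structures.
From mathcomp Require Import all_boot all_order all_algebra.
From mathcomp Require Import all_classical all_reals all_analysis.
Set Implicit Arguments. Unset Strict Implicit. Unset Printing Implicit Defensive.
Import Order.TTheory GRing.Theory Num.Theory.
Local Open Scope classical_set_scope.
Local Open Scope ring_scope.

(* Mutual independence of a finite family of random elements Z i : Omega -> T:
   the product rule for every family of measurable sets (taking E i = setT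
   recovers every finite subfamily). *)
Definition mutually_independent (R : realType) (d : measure_display)
  (Omega : measurableType d) (P : probability Omega R)
  (I : finType) (d' : measure_display) (T : measurableType d')
  (Z : I -> Omega -> T) : Prop :=
  forall E : I -> set T, (forall i, measurable (E i)) ->
    P (\bigcap_(i in [set: I]) (Z i @^-1` E i)) =
    \big[*%E/1%E]_(i : I) P (Z i @^-1` E i).

(* A countable partition of Theta into measurable sets, indexed by nat
   (some cells may be empty). *)
Definition countable_measurable_partition (d : measure_display)
  (Theta : measurableType d) (A : nat -> set Theta) : Prop :=
  [/\ forall n, measurable (A n), trivIset setT A & \bigcup_n A n = setT].

Definition same_cell (Theta : Type) (A : nat -> set Theta) (x y : Theta) : Prop :=
  exists n, A n x /\ A n y.

Section Calibration.
Variables (R : realType) (Theta Xs : Type) (A : nat -> set Theta)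
  (tau : Xs -> Theta -> R) (B : nat) (ths : 'I_B -> Theta) (xs : 'I_B -> Xs).

Definition cell_count (th' : Theta) : nat :=
  #|[set b : 'I_B | `[< same_cell A th' (ths b) >]]|.

Definition Hhat (t : R) (th' : Theta) : R :=
  ((#|[set b : 'I_B | `[< same_cell A th' (ths b) >] &&
                      (tau (xs b) (ths b) <= t)]|)%:R + 1) /
  ((cell_count th')%:R + 1).

(* hat C_{th',B} = inf {t : hat H_B(t | th') >= alpha}, in the extended reals
   (it is -oo when the set is all of R). *)
Definition Chat (alpha : R) (th' : Theta) : \bar R :=
  ereal_inf [set t%:E | t in [set t : R | alpha <= Hhat t th']].

Definition Rhat (alpha : R) (x : Xs) : set Theta :=
  [set th' | (Chat alpha th' <= (tau x th')%:E)%E].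
End Calibration.

From HB Require Import structures.
From mathcomp Require Import all_boot all_order all_algebra.
From mathcomp Require Import all_classical all_reals all_analysis.
From mathcomp Require Import fingroup perm measurable_realfun.
Import Order.TTheory GRing.Theory Num.Theory.
Local Open Scope classical_set_scope.
Local Open Scope ring_scope.

(* The test pair and the B calibration pairs are exchangeable, so swapping
   the test pair with pair [i] shows that the miscoverage probability equals
   the probability that [i] is nonconforming in the full sample: fewer than
   [alpha * N_i] of the [N_i] points of its cell score at most as much as it
   does.  In each cell the nonconforming points all score at most as much as
   the highest-scoring one among them, so there are fewer than [alpha * N] of
   them; hence at most [alpha * (B + 1)] points are nonconforming, and
   averaging over [i] bounds the miscoverage by [alpha]. *)

(* The counts only jump at scores, so they are constant just to the right of
   [t]: this is why the infimum defining [Chat] is attained. *)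
Lemma card_le_gap (R : realDomainType) (J : finType) (K : pred J) (v : J -> R)
    (t : R) :
  exists2 m, t < m & forall s, s < m ->
    (#|[set j | K j && (v j <= s)%R]| <= #|[set j | K j && (v j <= t)%R]|)%N.
Proof.
pose m := \big[Order.min/(t + 1)]_(j | K j && (t < v j)) v j.
have tm : t < m by apply/bigmin_gtP; split=> [|j /andP[]//]; rewrite ltrDl.
exists m => // s sm; apply: subset_leq_card; apply/fintype.subsetP => j.
rewrite !in_setE /= => /andP[Kj vjs]; rewrite Kj leNgt; apply/negP => tvj.
have : m <= v j by apply: bigmin_le_cond; rewrite Kj tvj.
by rewrite leNgt (le_lt_trans vjs sm).
Qed.

Section threshold.
Variables (R : realType) (Theta Xs : Type) (A : nat -> set Theta)
  (tau : Xs -> Theta -> R) (B : nat) (ths : 'I_B -> Theta) (xs : 'I_B -> Xs).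

Lemma Chat_leP (alpha : R) (th' : Theta) (t : R) :
  (Chat A tau ths xs alpha th' <= t%:E)%E <-> alpha <= Hhat A tau ths xs t th'.
Proof.
split=> [|alpha_le]; last by apply: ereal_inf_lbound; exists t.
apply: contraPP => /negP; rewrite -ltNge => Ht.
have [m tm gap] := @card_le_gap _ _ (fun b => `[< same_cell A th' (ths b) >])
  (fun b => tau (xs b) (ths b)) t.
have Hhat_gap s : s < m -> Hhat A tau ths xs s th' <= Hhat A tau ths xs t th'.
  move=> /gap cst; rewrite /Hhat ler_pM2r ?invr_gt0 ?ltr_wpDl //.
  by rewrite lerD2r ler_nat.
have mC : (m%:E <= Chat A tau ths xs alpha th')%E.
  apply: le_ereal_inf_tmp => _ [s /= hs <-]; rewrite lee_fin leNgt.
  by apply/negP => /Hhat_gap/(le_trans hs); rewrite leNgt Ht.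
by move=> /(le_trans mC); rewrite lee_fin leNgt tm.
Qed.
End threshold.

Section cells.
Variables (R : realFieldType) (I : finType) (e : rel I) (sc : I -> R) (alpha : R).
Hypotheses (alpha_ge0 : 0 <= alpha) (e_refl : reflexive e)
  (e_sym : symmetric e) (e_trans : transitive e).

Definition nonconforming (i : I) : bool :=
  #|[pred j | e i j && (sc j <= sc i)]|%:R < alpha * #|e i|%:R.

Lemma card_cell_eq {i j} : e i j -> #|e i| = #|e j|.
Proof.
by move=> eij; apply: eq_card => k; rewrite !unfold_in; apply/idP/idP;
  [apply: e_trans; rewrite e_sym | apply: e_trans].
Qed.

Lemma card_cell_gt0 i : (0 < #|e i|)%N.
Proof. by apply/card_gt0P; exists i; rewrite unfold_in e_refl. Qed.

Lemma sum_cell_average (f : I -> R) :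
  \sum_i f i = \sum_i #|e i|%:R^-1 * \sum_(j | e i j) f j.
Proof.
under [RHS]eq_bigr do rewrite big_distrr /=.
rewrite (exchange_big_dep xpredT) //=; apply: eq_bigr => j _.
rewrite -big_distrl /= -[LHS]mul1r; congr (_ * _).
under eq_bigr => i eij do rewrite (card_cell_eq eij).
under eq_bigl => i do rewrite e_sym.
rewrite sumr_const -[_ *+ #|e j|]mulr_natr mulVf // pnatr_eq0 -lt0n.
exact: card_cell_gt0.
Qed.

(* Every nonconforming point of the cell is counted by the rank count of the
   highest-scoring one [k], and that count is below [alpha * N]. *)
Lemma card_nonconforming_cell i :
  #|[pred j | e i j && nonconforming j]|%:R <= alpha * #|e i|%:R.
Proof.
have [j0 Pj0|none] := pickP [pred j | e i j && nonconforming j]; last first.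
  by rewrite (eq_card0 none) mulr_ge0.
have [k /andP[eik nck] kmax] :=
  @arg_maxP _ _ I j0 [pred j | e i j && nonconforming j] sc Pj0.
have : (#|[pred j | e i j && nonconforming j]| <=
        #|[pred j | e k j && (sc j <= sc k)%R]|)%N.
  apply: subset_leq_card; apply/fintype.subsetP => j.
  rewrite !inE => /andP[eij ncj].
  have ekj : e k j by rewrite (e_trans i) // e_sym.
  by rewrite ekj /=; apply: kmax; rewrite inE eij.
rewrite -(ler_nat R) => /le_trans; apply; apply: ltW.
by rewrite (card_cell_eq eik).
Qed.

Lemma sum_nonconforming : \sum_i (nonconforming i)%:R <= alpha * #|I|%:R.
Proof.
rewrite sum_cell_average mulr_natr -sumr_const.
apply: ler_sum => i _; rewrite ler_pdivrMl ?ltr0n ?card_cell_gt0 // mulrC.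
have -> : \sum_(j | e i j) (nonconforming j)%:R =
          #|[pred j | e i j && nonconforming j]|%:R :> R.
  rewrite -sumr_const big_mkcondr /=; apply: eq_bigr => j _.
  by case: (nonconforming j).
exact: card_nonconforming_cell.
Qed.
End cells.
Arguments nonconforming {R I}.
Arguments sum_nonconforming {R I e} sc {alpha}.

Lemma card_set_pred (T : finType) (P : pred T) : #|[set x | P x]| = #|P|.
Proof. by apply: eq_card => x; apply/idP/idP; rewrite in_setE unfold_in. Qed.

Lemma card_sum_pred (T : finType) (P : pred T) : #|P| = (\sum_x P x)%N.
Proof.
rewrite -sum1_card big_mkcond; apply: eq_bigr => x _.
by rewrite unfold_in; case: (P x).
Qed.

Lemma sum_option_nat (T : finType) (F : option T -> nat) :
  (\sum_j F j = F None + \sum_b F (Some b))%N.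
Proof.
rewrite (bigD1 None) //=; congr (_ + _)%N.
rewrite (reindex_omap Some id) => [|[] //].
by apply: eq_bigl => b; rewrite eqxx.
Qed.

Lemma card_tperm_Some (T : finType) (Q : pred (option T)) (i : option T) :
  Q i -> (#|[set b | Q (tperm None i (Some b))]|.+1 = #|Q|)%N.
Proof.
move=> Qi; rewrite card_set_pred !card_sum_pred.
rewrite [RHS](reindex_inj (@perm_inj _ (tperm None i))).
by rewrite sum_option_nat tpermL Qi.
Qed.

Section conformal.
Variables (R : realType) (Theta Xs : Type) (A : nat -> set Theta)
  (tau : Xs -> Theta -> R) (alpha : R) (B : nat).

(* A sample is indexed by [option 'I_B], [None] being the test pair; the
   [+ 1] terms of [Hhat] count the test pair itself. *)
Definition cellrel (z : option 'I_B -> Theta * Xs) : rel (option 'I_B) :=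
  fun i j => `[< same_cell A (z i).1 (z j).1 >].

Definition score (z : option 'I_B -> Theta * Xs) (i : option 'I_B) : R :=
  tau (z i).2 (z i).1.

Definition covers (z : option 'I_B -> Theta * Xs) : Prop :=
  Rhat A tau (fun b => (z (Some b)).1) (fun b => (z (Some b)).2) alpha
    (z None).2 (z None).1.

Lemma covers_tperm z i : cellrel z i i ->
  covers (fun j => z (tperm None i j)) <->
  ~~ nonconforming (cellrel z) (score z) alpha i.
Proof.
move=> refl; rewrite /covers /Rhat /nonconforming -leNgt /= tpermL.
apply: iff_trans; first exact: Chat_leP.
rewrite /Hhat /cell_count !natr1.
rewrite (@card_tperm_Some _ (fun j => cellrel z i j && (score z j <= score z i)))
  ?refl ?lexx //.
rewrite (@card_tperm_Some _ (cellrel z i)) // ler_pdivlMr // ltr0n.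
by apply/card_gt0P; exists i.
Qed.
End conformal.
Arguments cellrel {Theta Xs} A {B}.
Arguments score {R Theta Xs} tau {B}.
Arguments covers {R Theta Xs} A tau alpha {B}.
Arguments covers_tperm {R Theta Xs A tau alpha B z i}.

Section same_cell.
Variables (Theta : Type) (A : nat -> set Theta).

Lemma same_cell_refl : \bigcup_n A n = setT -> forall t, same_cell A t t.
Proof.
move=> Acov t; have : (\bigcup_n A n) t by rewrite Acov.
by case=> n _ Ant; exists n.
Qed.

Lemma same_cell_sym x y : same_cell A x y -> same_cell A y x.
Proof. by case=> n [? ?]; exists n. Qed.

Lemma same_cell_trans x y z : trivIset setT A ->
  same_cell A x y -> same_cell A y z -> same_cell A x z.
Proof.
move=> Atriv [n [Anx Any]] [m [Amy Amz]].
have nm : n = m by apply: Atriv => //; exists y.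
by rewrite nm in Anx; exists m.
Qed.
End same_cell.

Lemma cellrel_equiv {Theta Xs : Type} {A : nat -> set Theta} {B : nat}
    (z : option 'I_B -> Theta * Xs) :
  trivIset setT A -> \bigcup_n A n = setT ->
  [/\ reflexive (cellrel A z), symmetric (cellrel A z)
    & transitive (cellrel A z)].
Proof.
move=> Atriv Acov; split.
- by move=> i; apply/asboolP; apply: same_cell_refl.
- by move=> i j; apply/asboolP/asboolP; apply: same_cell_sym.
- move=> j i k /asboolP eij /asboolP ejk; apply/asboolP.
  exact: same_cell_trans ejk.
Qed.

Lemma preimage_measure_eq {R : realType} {d} {Omega : measurableType d}
    (P : probability Omega R) {d'} {S : measurableType d'} (G : set (set S))
    (f g : Omega -> S) :
  @measurable _ S = <<s G >> -> setI_closed G -> G setT ->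
  measurable_fun setT f -> measurable_fun setT g ->
  (forall E, G E -> P (f @^-1` E) = P (g @^-1` E)) ->
  forall E, measurable E -> P (f @^-1` E) = P (g @^-1` E).
Proof.
move=> mG GI GT mf mg fg.
apply: (measure_unique G (fun=> setT) mG GI (fun=> GT) _
  (pushforward P f) (pushforward P g)) => [|//|_].
- by rewrite bigcup_const.
- by rewrite /= /pushforward preimage_setT probability_setT ltry.
Qed.

Lemma pair_preimage_eq (R : realType) d (Omega : measurableType d)
    (P : probability Omega R) d1 d2 (T1 : measurableType d1)
    (T2 : measurableType d2) (f1 f2 : Omega -> T1) (g1 g2 : Omega -> T2) :
  measurable_fun setT f1 -> measurable_fun setT f2 ->
  measurable_fun setT g1 -> measurable_fun setT g2 ->
  (forall E F, measurable E -> measurable F ->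
     P (f1 @^-1` E `&` g1 @^-1` F) = P (f2 @^-1` E `&` g2 @^-1` F)) ->
  forall E, measurable E ->
    P ((fun w => (f1 w, g1 w)) @^-1` E) = P ((fun w => (f2 w, g2 w)) @^-1` E).
Proof.
move=> mf1 mf2 mg1 mg2 fg.
apply: (preimage_measure_eq P [set E `*` F | E in measurable & F in measurable]).
- exact: measurable_prod_measurableType.
- move=> _ _ [E1 mE1 [F1 mF1 <-]] [E2 mE2 [F2 mF2 <-]].
  exists (E1 `&` E2); first exact: measurableI.
  by exists (F1 `&` F2); [exact: measurableI | rewrite setXI].
- by exists setT => //; exists setT; rewrite ?setXTT.
- exact: measurable_fun_pair.
- exact: measurable_fun_pair.
- by move=> _ [E mE [F mF <-]]; apply: fg.
Qed.

Lemma sum_measure_le {R : realType} {d} {Omega : measurableType d}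
    (P : probability Omega R) {I : finType} (E : I -> set Omega) (c : R) :
  (forall i, measurable (E i)) -> (forall w, \sum_i \1_(E i) w <= c) ->
  (\sum_i P (E i) <= c%:E)%E.
Proof.
move=> mE Ec.
under eq_bigr => i _ do rewrite -[E i]setIT -integral_indic //.
rewrite -(@ge0_integral_sum _ _ _ P _ measurableT _
  (fun i w => (\1_(E i) w)%:E)); first last.
- by move=> i w _; rewrite lee_fin.
- by move=> i; apply/measurable_EFinP; apply: measurable_indic.
apply: le_trans (_ : \int[P]_(w in setT) (cst c%:E) w <= _)%E.
  apply: ge0_le_integral => //.
  - by move=> w _; apply: sume_ge0 => i _; rewrite lee_fin.
  - apply: emeasurable_sum => i.
    by apply/measurable_EFinP; apply: measurable_indic.
  - by move=> w _; rewrite sumEFin lee_fin.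
by rewrite integral_cst // [X in (_ * X)%E](probability_setT P) mule1.
Qed.

Lemma measurable_bool_combination d (S : measurableType d) (J : finType)
    (h : J -> S -> bool) (F : (J -> bool) -> Prop) :
  (forall j, measurable [set z | h j z]) -> measurable [set z | F (h^~ z)].
Proof.
move=> mh.
have -> : [set z | F (h^~ z)] =
    \bigcup_(u in [set u : {ffun J -> bool} | F u])
      \bigcap_(j in [set: J]) [set z | h j z = u j].
  apply/seteqP; split=> z /=.
    move=> Fz; exists [ffun j => h j z] => [|j _]; last by rewrite ffunE.
    rewrite /mkset (_ : fun_of_fin _ = h^~ z) //.
    by apply: funext => j; rewrite ffunE.
  by move=> [u Fu hu]; rewrite (_ : h^~ z = u) //; apply: funext => j; apply: hu.
apply: fin_bigcup_measurable => [|u _]; first exact: finite_finset.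
apply: fin_bigcap_measurable => [|j _]; first exact: finite_finset.
case: (u j); first exact: mh.
rewrite (_ : [set z | h j z = false] = ~` [set z | h j z]).
  exact/measurableC/mh.
by apply/seteqP; split=> z /=; [move=> -> | move/negP/negbTE].
Qed.

Section finite_product.
Variables (d : measure_display) (T : measurableType d) (I : finType).

Definition box (E : I -> set T) : set (I -> T) := [set z | forall i, E i (z i)].

Definition boxes : set (set (I -> T)) :=
  [set box E | E in [set E | forall i, measurable (E i)]].

Definition finprod := g_sigma_algebraType boxes.

Lemma boxes_setI_closed : setI_closed boxes.
Proof.
move=> _ _ [E mE <-] [F mF <-]; exists (fun i => E i `&` F i).
  by move=> i; apply: measurableI.
apply/seteqP; split=> z /=; last by move=> [? ?] i.
by move=> Ez; split=> i; case: (Ez i).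
Qed.

Lemma boxesT : boxes setT.
Proof. by exists (fun=> setT) => //; apply/seteqP; split. Qed.

Lemma measurable_coord (i : I) : measurable_fun setT (fun z : finprod => z i).
Proof.
move=> _ E mE; rewrite setTI; apply: sub_sigma_algebra.
exists (fun j => if j == i then E else setT) => [j|]; first by case: ifP.
apply/seteqP; split=> z /=; first by move=> /(_ i); rewrite eqxx.
by move=> Ez j; case: eqP => // ->.
Qed.

Lemma measurable_tuple d' (Omega : measurableType d') (f : I -> Omega -> T) :
  (forall i, measurable_fun setT (f i)) ->
  measurable_fun setT (fun w => (fun i => f i w) : finprod).
Proof.
move=> mf.
apply: (@measurability _ _ Omega finprod setT _ boxes erefl).
move=> _ [_ [E mE <-] <-].
rewrite setTI (_ : _ @^-1` _ = \bigcap_(i in setT) f i @^-1` E i).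
  apply: fin_bigcap_measurable => [|i _]; first exact: finite_finset.
  by rewrite -[_ @^-1` _]setTI; apply: mf.
by apply/seteqP; split=> w /= h i => [_|]; apply: h.
Qed.
End finite_product.
Arguments box {d T I}.
Arguments boxes {d} T I.
Arguments finprod {d} T I.
Arguments measurable_coord {d T I}.

Section exchangeable.
Variables (R : realType) (dO : measure_display) (Omega : measurableType dO)
  (P : probability Omega R) (d : measure_display) (T : measurableType d)
  (I : finType) (Z : I -> Omega -> T).
Hypotheses (mZ : forall i, measurable_fun setT (Z i))
  (Z_indep : mutually_independent P Z)
  (Z_ident : forall i j E, measurable E -> P (Z i @^-1` E) = P (Z j @^-1` E)).

Definition permuted_sample (s : {perm I}) (w : Omega) : finprod T I :=
  fun i => Z (s i) w.

Lemma measurable_permuted_sample s : measurable_fun setT (permuted_sample s).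
Proof. by apply: measurable_tuple => i; apply: mZ. Qed.

Lemma permuted_sample_box s (E : I -> set T) : (forall i, measurable (E i)) ->
  P (permuted_sample s @^-1` box E) = (\big[*%E/1%E]_i P (Z i @^-1` E i))%E.
Proof.
move=> mE.
have -> : permuted_sample s @^-1` box E =
          \bigcap_(i in [set: I]) Z i @^-1` E ((s^-1)%g i).
  apply/seteqP; split=> w; rewrite /box /permuted_sample /= => h i.
    by move=> _; have := h ((s^-1)%g i); rewrite permKV.
  by have := h (s i) Logic.I; rewrite permK.
rewrite Z_indep => [|i]; last exact: mE.
rewrite [RHS](reindex_inj (@perm_inj _ (s^-1)%g)); apply: eq_bigr => i _.
exact: Z_ident.
Qed.

Lemma exchangeable s (M : set (finprod T I)) : measurable M ->
  P (permuted_sample s @^-1` M) = P (permuted_sample 1 @^-1` M).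
Proof.
apply: (preimage_measure_eq P (boxes T I : set (set (finprod T I)))) => //.
- exact: boxes_setI_closed.
- exact: boxesT.
- exact: measurable_permuted_sample.
- exact: measurable_permuted_sample.
- by move=> _ [E mE <-]; rewrite !permuted_sample_box.
Qed.
End exchangeable.
Arguments permuted_sample {dO Omega d T I}.

Section measurable_covers.
Variables (R : realType) (dT : measure_display) (Theta : measurableType dT)
  (dX : measure_display) (Xs : measurableType dX) (A : nat -> set Theta)
  (tau : Xs -> Theta -> R) (alpha : R) (B : nat).
Hypotheses (mA : forall n, measurable (A n))
  (mtau : measurable_fun setT (fun p : Xs * Theta => tau p.1 p.2)).

Local Notation sample := (finprod (Theta * Xs)%type (option 'I_B)).

Lemma measurable_score k : measurable_fun setT (fun z : sample => score tau z k).
Proof.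
apply: (measurableT_comp (f := fun p : Xs * Theta => tau p.1 p.2)
  (g := fun z : sample => ((z k).2, (z k).1))) => //.
by apply: measurable_fun_pair; apply: measurableT_comp (measurable_coord k).
Qed.

Lemma measurable_cellrel i j : measurable [set z : sample | cellrel A z i j].
Proof.
have -> : [set z : sample | cellrel A z i j] = \bigcup_n
    ((fun z : sample => z i) @^-1` (A n `*` setT) `&`
     (fun z : sample => z j) @^-1` (A n `*` setT)).
  apply/seteqP; split=> z /=; first by move=> /asboolP[n [? ?]]; exists n.
  by move=> [n _ [[? _] [? _]]]; apply/asboolP; exists n.
apply: bigcupT_measurable => n; apply: measurableI;
  rewrite -[_ @^-1` _]setTI; apply: measurable_coord => //;
  exact: measurableX.
Qed.

Lemma measurable_covers : measurable [set z : sample | covers A tau alpha z].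
Proof.
pose bit (j : 'I_B * bool) (z : sample) : bool :=
  if j.2 then score tau z (Some j.1) <= score tau z None
  else cellrel A z None (Some j.1).
have -> : [set z : sample | covers A tau alpha z] = [set z | alpha <=
    ((#|[set b | bit (b, false) z && bit (b, true) z]|)%:R + 1) /
    ((#|[set b | bit (b, false) z]|)%:R + 1)].
  by apply/seteqP; split=> z /Chat_leP.
apply: (@measurable_bool_combination _ _ _ bit
  (fun u => alpha <= ((#|[set b | u (b, false) && u (b, true)]|)%:R + 1) /
                        ((#|[set b | u (b, false)]|)%:R + 1))) => -[b []].
  rewrite -[X in measurable X]setTI.
  exact: measurable_fun_ler (measurable_score _) (measurable_score _)
    measurableT _ Logic.I.
exact: measurable_cellrel.
Qed.
End measurable_covers.

Section coverage.
Variables (R : realType) (dO : measure_display) (Omega : measurableType dO)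
  (P : probability Omega R) (dT : measure_display) (Theta : measurableType dT)
  (dX : measure_display) (Xs : measurableType dX) (A : nat -> set Theta)
  (tau : Xs -> Theta -> R) (alpha : R) (B : nat)
  (Z : option 'I_B -> Omega -> Theta * Xs).
Hypotheses (alpha_ge0 : 0 <= alpha) (hA : countable_measurable_partition A)
  (mtau : measurable_fun setT (fun p : Xs * Theta => tau p.1 p.2))
  (mZ : forall i, measurable_fun setT (Z i))
  (Z_indep : mutually_independent P Z)
  (Z_ident : forall i j E, measurable E -> P (Z i @^-1` E) = P (Z j @^-1` E)).

Local Notation sample := (finprod (Theta * Xs)%type (option 'I_B)).
Let M : set sample := ~` [set z | covers A tau alpha z].

Let mM : measurable M.
Proof. by case: hA => mA _ _; apply: measurableC; apply: measurable_covers. Qed.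

Lemma sum_nonconforming_indic w :
  \sum_i \1_(permuted_sample Z (tperm None i) @^-1` M) w <=
  alpha * #|{: option 'I_B}|%:R.
Proof.
case: hA => _ Atriv Acov; pose z j := Z j w.
have [crefl csym ctrans] := cellrel_equiv z Atriv Acov.
apply: le_trans (sum_nonconforming (score tau z) alpha_ge0 crefl csym ctrans).
apply: ler_sum => i _; rewrite indicE ler_nat.
have [_|conf] := boolP (nonconforming (cellrel A z) (score tau z) alpha i).
  exact: leq_b1.
rewrite leqn0 eqb0; apply/negP; rewrite in_setE => ncov; apply: ncov.
exact: (covers_tperm (crefl i)).2.
Qed.

Lemma miscoverage_le : (P (permuted_sample Z 1 @^-1` M) <= alpha%:E)%E.
Proof.
have mMs s : measurable (permuted_sample Z s @^-1` M).
  by rewrite -[_ @^-1` _]setTI; apply: measurable_permuted_sample.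
have := sum_measure_le P _ _ (fun i => mMs _) sum_nonconforming_indic.
have p_fin := fin_num_measure P _ (mMs 1%g).
under eq_bigr do rewrite exchangeable // -(fineK p_fin).
rewrite sumEFin lee_fin sumr_const -[_ *+ _]mulr_natr.
rewrite ler_pM2r ?ltr0n ?card_option //.
by move=> p_le; rewrite -(fineK p_fin) lee_fin.
Qed.

Theorem coverage_ge :
  ((1 - alpha)%:E <= P [set w | covers A tau alpha (fun i => Z i w)])%E.
Proof.
have sample1 : permuted_sample Z 1 = fun w i => Z i w.
  by apply/funext => w; apply/funext => i; rewrite /permuted_sample perm1.
have -> : [set w | covers A tau alpha (fun i => Z i w)] =
          ~` (permuted_sample Z 1 @^-1` M).
  by rewrite -preimage_setC setCK sample1.
rewrite probability_setC; last first.
  by rewrite -[_ @^-1` _]setTI; apply: measurable_permuted_sample.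
by rewrite EFinB; apply: leeB => //; apply: miscoverage_le.
Qed.
End coverage.
Arguments coverage_ge {R dO Omega P dT Theta dX Xs A tau alpha B Z}.

Theorem corollary1 (R : realType)
  (dO : measure_display) (Omega : measurableType dO) (P : probability Omega R)
  (dT : measure_display) (Theta : measurableType dT)
  (dX : measure_display) (Xs : measurableType dX)
  (model : R.-pker Theta ~> Xs) (r : probability Theta R)
  (alpha : R) (halpha0 : 0 < alpha) (halpha1 : alpha < 1)
  (tau : Xs -> Theta -> R)
  (htau : measurable_fun setT (fun p : Xs * Theta => tau p.1 p.2))
  (htau_cont : forall (th0 : Theta) (t0 : R),
      model th0 [set y | tau y th0 = t0] = 0%E)
  (A : nat -> set Theta) (hA : countable_measurable_partition A)
  (B : nat)
  (* index None is the test pair (theta, X); Some b are the B calibration pairs *)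
  (th : option 'I_B -> Omega -> Theta) (x : option 'I_B -> Omega -> Xs)
  (hth : forall i, measurable_fun setT (th i))
  (hx : forall i, measurable_fun setT (x i))
  (hlaw : forall i (E : set Theta) (F : set Xs), measurable E -> measurable F ->
      P (th i @^-1` E `&` x i @^-1` F) = (\int[r]_(t in E) model t F)%E)
  (hindep : mutually_independent P (fun i w => (th i w, x i w))) :
  ((1 - alpha)%:E <=
    P [set w | Rhat A tau (fun b => th (Some b) w) (fun b => x (Some b) w)
                    alpha (x None w) (th None w)])%E.
Proof.
pose Z i w := (th i w, x i w).
have mZ i : measurable_fun setT (Z i) by apply: measurable_fun_pair.
have Z_ident i j E : measurable E -> P (Z i @^-1` E) = P (Z j @^-1` E).
  by apply: pair_preimage_eq => // E' F mE mF; rewrite !hlaw.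
exact: coverage_ge (ltW halpha0) hA htau mZ hindep Z_ident.
Qed.
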